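(* Every complete Boolean algebra that admits a strictly positive $\sigma$-additive measure is $\sigma$-uf-linked. In particular, every random algebra is $\sigma$-uf-linked.
   Context: For a poset $\mathbb{P}$ and $\bar p=\langle p_n:n<\omega\rangle$ in $\mathbb{P}$, $\dot W(\bar p)$ names $\{n:p_n\in\dot G\}$. $Q\subseteq\mathbb{P}$ is uf-linked if for every non-principal ultrafilter $D$ on $\omega$ and every sequence $\bar p$ of members of $Q$ there is $q\in\mathbb{P}$ forcing that $\dot W(\bar p)$ meets every member of $D$. $\mathbb{P}$ is $\sigma$-uf-linked if it is a union of countably many uf-linked subsets. (A Boolean algebra is regarded as a poset with its nonzero elements.) *)

From mathcomp Require Import all_boot all_order.
From Stdlib Require Import Reals.
Set Implicit Arguments. Unset Strict Implicit. Unset Printing Implicit Defensive.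
Import Order.TTheory.

(* Boolean algebras are MathComp's complemented distributive lattices with
   top and bottom ([ctbDistrLatticeType d]).  Subsets are predicates T -> Prop. *)

Definition is_lub {d} {T : porderType d} (S : T -> Prop) (s : T) : Prop :=
  (forall x, S x -> (x <= s)%O) /\
  (forall u, (forall x, S x -> (x <= u)%O) -> (s <= u)%O).

Definition complete_BA {d} (B : ctbDistrLatticeType d) : Prop :=
  forall S : B -> Prop, exists s, is_lub S s.

Definition sigma_additive_measure {d} (B : ctbDistrLatticeType d) (mu : B -> R) : Prop :=
  mu (\bot)%O = 0%R /\
  (forall b, (0 <= mu b)%R) /\
  (forall (b : nat -> B) (s : B),
      (forall i j, i <> j -> Order.meet (b i) (b j) = (\bot)%O) ->
      is_lub (fun x => exists n, x = b n) s ->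
      infinite_sum (fun n => mu (b n)) (mu s)).

Definition strictly_positive {d} (B : ctbDistrLatticeType d) (mu : B -> R) : Prop :=
  forall b : B, b <> (\bot)%O -> (0 < mu b)%R.

Definition nonprincipal_ultrafilter (D : (nat -> Prop) -> Prop) : Prop :=
  D (fun _ => True) /\
  ~ D (fun _ => False) /\
  (forall A C, D A -> D C -> D (fun n => A n /\ C n)) /\
  (forall A C, D A -> (forall n, A n -> C n) -> D C) /\
  (forall A, D A \/ D (fun n => ~ A n)) /\
  (forall k : nat, ~ D (fun n => n = k)).

(* A forcing poset is given by a carrier predicate [P] on a type [T] with
   a preorder [le] (stronger = smaller). *)
Definition compatible {T} (P : T -> Prop) (le : T -> T -> Prop) (x y : T) : Prop :=
  exists z, P z /\ le z x /\ le z y.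

(* q forces "W(p) meets A" (A a ground-model set of naturals), where
   W(p) names {n | p_n in G}: the standard forcing relation for the
   existential formula "exists n in A, p_n in G", i.e. every r <= q in P
   is compatible with p_n for some n in A. *)
Definition forces_W_meets {T} (P : T -> Prop) (le : T -> T -> Prop)
  (q : T) (p : nat -> T) (A : nat -> Prop) : Prop :=
  forall r, P r -> le r q -> exists n, A n /\ compatible P le r (p n).

Definition uf_linked {T} (P : T -> Prop) (le : T -> T -> Prop) (Q : T -> Prop) : Prop :=
  (forall x, Q x -> P x) /\
  forall D, nonprincipal_ultrafilter D ->
  forall p : nat -> T, (forall n, Q (p n)) ->
  exists q, P q /\ forall A, D A -> forces_W_meets P le q p A.

Definition sigma_uf_linked {T} (P : T -> Prop) (le : T -> T -> Prop) : Prop :=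
  exists Qs : nat -> T -> Prop,
    (forall k, uf_linked P le (Qs k)) /\
    (forall x, P x -> exists k, Qs k x).

Definition BA_poset {d} (B : ctbDistrLatticeType d) : B -> Prop :=
  fun b => b <> (\bot)%O.

Definition BA_le {d} (B : ctbDistrLatticeType d) : B -> B -> Prop :=
  fun a b => (a <= b)%O.

(* Let Q_k be the set of b with mu b > 1/(k+1); these cover the nonzero elements.
   Given a filter D and p_n in Q_k, the joins s_A = sup {p_n | n in A}, A in D,
   form a downward directed family of elements of measure > 1/(k+1).  Such a
   family has a nonzero lower bound t: pick A_j in D with mu (s_{A_j}) tending to
   the infimum m of mu over the family, refine them to a decreasing sequence
   u_j in the family and let t be its meet.  Then t <> 0 by continuity of mu from above
   (sigma-additivity applied to the layers u_{n-1} \ u_n), and t \ s_A has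
   measure at most 1/(j+1) for every j, since it lies below
   u_j \ (an element of the family below u_j and s_A), whose measure is at most
   mu(u_j) - m; strict positivity then gives t <= s_A.  Finally a nonzero
   r <= t incompatible with every p_n, n in A, would lie below the complement of
   s_A, hence below its own complement. *)

From Pilot Require Import Defs.
From mathcomp Require Import all_boot all_order.
From Stdlib Require Import Reals Lra Classical ClassicalEpsilon.
Import Order.Theory.
Set Implicit Arguments. Unset Strict Implicit.
Local Open Scope R_scope.

Lemma exists_inf_approx {T : Type} (F : T -> Prop) (f : T -> R) (l : R) :
  (exists x, F x) -> (forall x, F x -> l <= f x) ->
  exists m, (forall x, F x -> m <= f x) /\
            forall eta, 0 < eta -> exists x, F x /\ f x < m + eta.
Proof.
move=> [x0 Fx0] lb_f.
have [L [ub_L least_L]] : {L | Raxioms.is_lub (fun y => exists x, F x /\ y = - f x) L}.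
  apply: completeness; last by exists (- f x0), x0.
  by exists (- l) => _ [x [/lb_f ? ->]]; lra.
exists (- L); split.
- by move=> x Fx; have := ub_L (- f x) (ex_intro _ x (conj Fx erefl)); lra.
- move=> eta eta_gt0; apply: NNPP => no_x.
  suff : L <= L - eta by lra.
  apply: least_L => _ [x [Fx ->]]; apply: Rnot_lt_le => lt_x.
  by apply: no_x; exists x; split => //; lra.
Qed.

Lemma inv_INR_succ_gt0 (j : nat) : 0 < / INR j.+1.
Proof. exact/Rinv_0_lt_compat/lt_0_INR/Nat.lt_0_succ. Qed.

Lemma le0_of_lt_inv_succ (x : R) : (forall j, x < / INR j.+1) -> x <= 0.
Proof.
move=> lt_x; apply: Rnot_lt_le => x_gt0.
have [[|N] [ltN N_gt0]] := archimed_cor1 _ x_gt0; first by inversion N_gt0.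
by have := lt_x N; lra.
Qed.

Lemma is_lub_le_subset {d} {T : porderType d} (S S' : T -> Prop) (s s' : T) :
  (forall x, S x -> S' x) -> Defs.is_lub S s -> Defs.is_lub S' s' -> (s <= s')%O.
Proof. by move=> sub_S [_ least_s] [ub_s' _]; apply: least_s => x /sub_S /ub_s'. Qed.

Lemma directed_decreasing_below {d} {T : porderType d} (F : T -> Prop) (a : nat -> T) :
  (forall x y, F x -> F y -> exists z, F z /\ (z <= x)%O /\ (z <= y)%O) ->
  (forall j, F (a j)) ->
  exists b : nat -> T, (forall j, F (b j)) /\ (forall j, b j <= a j)%O /\
                       (forall j, b j.+1 <= b j)%O.
Proof.
move=> dirF Fa.
pose g x y := epsilon (inhabits x) (fun z => F z /\ (z <= x)%O /\ (z <= y)%O).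
have gP x y : F x -> F y -> F (g x y) /\ (g x y <= x)%O /\ (g x y <= y)%O.
  by move=> Fx Fy; exact: (epsilon_spec (inhabits x) _ (dirF _ _ Fx Fy)).
pose fix b j := if j is j'.+1 then g (b j') (a j) else a O.
have Fb_le j : F (b j) /\ (b j <= a j)%O.
  elim: j => [|j [Fbj _]] /=; first by [].
  by have [? [_ ?]] := gP _ _ Fbj (Fa j.+1).
exists b; split; [|split] => j; try by have [] := Fb_le j.
by have [_ [? _]] := gP _ _ (proj1 (Fb_le j)) (Fa j.+1).
Qed.

Definition layer {d} {B : ctbDistrLatticeType d} (u : nat -> B) (n : nat) : B :=
  ((if n is k.+1 then u k else \top) `\` u n)%O.

Section Layers.
Variables (d : Order.disp_t) (B : ctbDistrLatticeType d) (u : nat -> B).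

Lemma layer_disjoint : (forall k, u k.+1 <= u k)%O ->
  forall i j, i <> j -> (layer u i `&` layer u j)%O = \bot%O.
Proof.
move=> u_dec.
have disj i j : (i < j)%nat -> (layer u i `&` layer u j)%O = \bot%O.
  case: j => [|j] // lt_ij; apply/eqP.
  rewrite -lex0 -(diffIK (if i is k.+1 then u k else \top%O) (u i)).
  apply: leI2 => //; apply: le_trans (leBx _ _) _.
  rewrite ltnS in lt_ij; elim: j lt_ij => [|j IH]; first by rewrite leqn0 => /eqP ->.
  by rewrite leq_eqVlt => /orP [/eqP <- // | /IH]; apply: le_trans (u_dec j).
move=> i j /eqP; rewrite neq_ltn => /orP [/disj // | /disj]; by rewrite meetC.
Qed.

Lemma is_lub_layer : (forall x, (forall k, x <= u k)%O -> x = \bot%O) ->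
  Defs.is_lub (fun x => exists n, x = layer u n) \top%O.
Proof.
move=> inf_u; split => [x _|x ub_x]; first exact: lex1.
have le_u k : (\top `\` x <= u k)%O.
  elim: k => [|k IH]; first by rewrite leBLR joinC -leBLR; apply: ub_x; exists 0%nat.
  have le_uk : (u k `\` u k.+1 <= x)%O by apply: ub_x; exists k.+1.
  have -> : (\top `\` x = \top `\` x `\` x)%O by rewrite diffBx joinxx.
  by apply: le_trans (leBl x IH) _; rewrite leBLR joinC -leBLR.
by move/eqP: (inf_u _ le_u); rewrite diff_eq0.
Qed.

End Layers.

Lemma forces_W_meets_below_lub {d} {B : ctbDistrLatticeType d} (p : nat -> B)
    (A : nat -> Prop) (s q : B) :
  Defs.is_lub (fun x => exists n, A n /\ x = p n) s -> (q <= s)%O ->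
  forces_W_meets (@BA_poset d B) (@BA_le d B) q p A.
Proof.
move=> [_ least_s] le_qs r r0 le_rq; apply: NNPP => no_n.
have le_p_compl n : A n -> (p n <= ~` r)%O.
  move=> An; rewrite -disj_leC meetC; apply/eqP; apply: NNPP => rp0.
  by apply: no_n; exists n; split => //; exists (r `&` p n)%O; rewrite /BA_le leIl leIr.
have : (r <= ~` r)%O.
  by apply: le_trans le_rq (le_trans le_qs (least_s _ _)) => _ [n [An ->]]; exact: le_p_compl.
by rewrite -disj_leC meetxx => /eqP.
Qed.

Section MeasureAlgebra.
Variables (d : Order.disp_t) (B : ctbDistrLatticeType d) (mu : B -> R).
Hypothesis mu_sigma : sigma_additive_measure mu.

Lemma mu_bot : mu \bot%O = 0.
Proof. by case: mu_sigma. Qed.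

Lemma mu_ge0 (b : B) : 0 <= mu b.
Proof. by case: mu_sigma => _ []. Qed.

Lemma mu_join_disjoint (a b : B) : (a `&` b)%O = \bot%O -> mu (a `|` b)%O = mu a + mu b.
Proof.
move=> ab0; case: mu_sigma => _ [_ sigma_add].
pose f n : B := match n with 0 => a | 1 => b | _ => \bot%O end.
have f_disj i j : i <> j -> (f i `&` f j)%O = \bot%O.
  move: i j => [|[|i]] [|[|j]] ij; rewrite /f /= ?meet0x ?meetx0 ?(meetC b a) //;
  by case: (ij erefl).
have f_lub : Defs.is_lub (fun x => exists n, x = f n) (a `|` b)%O.
  split => [_ [[|[|n]] ->]|x ub_x]; rewrite /f /= ?leUl ?leUr ?le0x //.
  by rewrite leUx (ub_x a) ?(ub_x b) //; [exists 1%nat | exists 0%nat].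
have f_sum n : sum_f_R0 (fun n => mu (f n)) n.+1 = mu a + mu b.
  by elim: n => [|n IH] //=; rewrite /= in IH; rewrite IH mu_bot; ring.
apply: (uniqueness_sum _ _ _ (sigma_add _ _ f_disj f_lub)) => eps eps_gt0.
exists 1%nat => [[|n] le1n]; first by inversion le1n.
by rewrite f_sum /R_dist Rminus_diag Rabs_R0.
Qed.

Lemma mu_diff (a b : B) : (a <= b)%O -> mu (b `\` a)%O = mu b - mu a.
Proof.
move=> le_ab; have := mu_join_disjoint (diffKI b a); rewrite leBKU //; lra.
Qed.

Lemma le_mu (a b : B) : (a <= b)%O -> mu a <= mu b.
Proof. by move=> le_ab; have := mu_diff le_ab; have := mu_ge0 (b `\` a)%O; lra. Qed.

Lemma mu_decreasing_to_bot (u : nat -> B) :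
  (forall k, u k.+1 <= u k)%O -> (forall x, (forall k, x <= u k)%O -> x = \bot%O) ->
  forall eps, 0 < eps -> exists k, mu (u k) < eps.
Proof.
move=> u_dec inf_u eps eps_gt0.
have partial_sum k : sum_f_R0 (fun n => mu (layer u n)) k = mu \top%O - mu (u k).
  elim: k => [|k IH] /=; first exact: mu_diff (lex1 _).
  by rewrite IH /layer mu_diff //; ring.
case: mu_sigma => _ [_ sigma_add].
have sum_top : infinite_sum (fun n => mu (layer u n)) (mu \top%O).
  exact: sigma_add (layer_disjoint u_dec) (is_lub_layer inf_u).
have [N conv] := sum_top eps eps_gt0.
exists N; move: (conv N (le_n N)); rewrite partial_sum /R_dist.
by rewrite Rabs_left1; have := mu_ge0 (u N); lra.
Qed.

End MeasureAlgebra.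

Section CompleteMeasureAlgebra.
Variables (d : Order.disp_t) (B : ctbDistrLatticeType d) (mu : B -> R).
Hypotheses (B_complete : complete_BA B) (mu_sigma : sigma_additive_measure mu)
  (mu_pos : strictly_positive mu).

Lemma directed_nonzero_lower_bound (F : B -> Prop) (eps : R) : 0 < eps ->
  (exists a, F a) ->
  (forall a b, F a -> F b -> exists c, F c /\ (c <= a)%O /\ (c <= b)%O) ->
  (forall a, F a -> eps <= mu a) ->
  exists t, t <> \bot%O /\ forall a, F a -> (t <= a)%O.
Proof.
move=> eps_gt0 [a0 Fa0] dirF mu_ge_eps.
have [m [m_lb m_approx]] :=
  exists_inf_approx (ex_intro F a0 Fa0) (fun a _ => mu_ge0 mu_sigma a).
have [a a_approx] : exists a : nat -> B, forall j, F (a j) /\ mu (a j) < m + / INR j.+1.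
  apply: (choice (fun j x => F x /\ mu x < m + / INR j.+1)) => j.
  exact: m_approx (/ INR j.+1) (inv_INR_succ_gt0 j).
have [b [Fb [b_le_a b_dec]]] := directed_decreasing_below dirF (fun j => proj1 (a_approx j)).
have [t [t_ub t_least]] := B_complete (fun x => forall j, (x <= b j)%O).
have t_le_b j : (t <= b j)%O by apply: t_least => x; apply.
exists t; split.
- move=> t0; have [k lt_bk] : exists k, mu (b k) < eps.
    apply: (mu_decreasing_to_bot mu_sigma b_dec _ eps_gt0) => x le_xb.
    by apply/eqP; rewrite -lex0 -t0; exact: t_ub.
  by have := mu_ge_eps _ (Fb k); lra.
- move=> c Fc.
  have small j : mu (t `\` c)%O < / INR j.+1.
    have [e [Fe [le_ec le_eb]]] := dirF _ _ Fc (Fb j).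
    have := le_mu mu_sigma (leB2 (t_le_b j) le_ec); rewrite (mu_diff mu_sigma le_eb).
    have := le_mu mu_sigma (b_le_a j); have := proj2 (a_approx j).
    have := m_lb _ Fe; lra.
  have : (t `\` c)%O = \bot%O.
    by apply: NNPP => tc0; have := mu_pos tc0; have := le0_of_lt_inv_succ small; lra.
  by move/eqP; rewrite diff_eq0.
Qed.

Lemma uf_linked_measure_gt (eps : R) : 0 < eps ->
  uf_linked (@BA_poset d B) (@BA_le d B) (fun b => eps < mu b).
Proof.
move=> eps_gt0; split=> [b lt_b b0|D [DT [DF [DI [DU _]]]] p lt_p].
  by move: lt_b; rewrite b0 (mu_bot mu_sigma); lra.
pose lub_of A := Defs.is_lub (fun x => exists n, A n /\ x = p n).
have lub_ex A : exists s, lub_of A s by exact: B_complete.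
have [t [t0 t_le]] : exists t, t <> \bot%O /\
    forall s, (exists A, D A /\ lub_of A s) -> (t <= s)%O.
  apply: (directed_nonzero_lower_bound (eps := eps)) => //.
  - by have [s ls] := lub_ex (fun _ => True); exists s, (fun _ => True).
  - move=> a c [A [DA la]] [C [DC lc]].
    have [e le] := lub_ex (fun n => A n /\ C n).
    exists e; split; first by exists (fun n => A n /\ C n); split; first exact: DI.
    by split; [apply: is_lub_le_subset le la | apply: is_lub_le_subset le lc];
      move=> _ [n [[An Cn] ->]]; exists n.
  - move=> a [A [DA [ub_a _]]].
    have [n An] : exists n, A n.
      by apply: NNPP => no_n; apply: DF; apply: DU DA _ => n An; apply: no_n; exists n.
    have := le_mu mu_sigma (ub_a _ (ex_intro _ n (conj An erefl))); have := lt_p n; lra.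
exists t; split => // A DA.
have [s ls] := lub_ex A.
exact: forces_W_meets_below_lub ls (t_le s (ex_intro _ A (conj DA ls))).
Qed.

End CompleteMeasureAlgebra.

Theorem lemma3p4 (d : Order.disp_t) (B : ctbDistrLatticeType d) :
  complete_BA B ->
  (exists mu : B -> R, sigma_additive_measure mu /\ strictly_positive mu) ->
  sigma_uf_linked (@BA_poset d B) (@BA_le d B).
Proof.
move=> B_complete [mu [mu_sigma mu_pos]].
exists (fun k b => / INR k.+1 < mu b); split.
- by move=> k; exact: uf_linked_measure_gt (inv_INR_succ_gt0 k).
- move=> b b0; have [[|N] [lt_N N_gt0]] := archimed_cor1 _ (mu_pos b b0).
    by inversion N_gt0.
  by exists N.
Qed.
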